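(* Let $G$ be a finite group and let $p,q$ be distinct primes that are non-adjacent in the codegree graph $\Gamma(G)$. Then it cannot happen that $G$ has a Hall $\{p,q\}$-subgroup $H_1$ which is either a Frobenius group whose kernel is its Sylow $q$-subgroup and whose complement is its Sylow $p$-subgroup, or a 2-Frobenius group of type $(p,q,p)$, and also a Hall $\{p,q\}$-subgroup $H_2$ which is either a Frobenius group whose kernel is its Sylow $p$-subgroup and whose complement is its Sylow $q$-subgroup, or a 2-Frobenius group of type $(q,p,q)$. Consequently, orienting the edge $pq$ of $\overline{\Gamma}(G)$ as $p\to q$ when some Hall $\{p,q\}$-subgroup is of the first kind gives an orientation independent of the choice of Hall $\{p,q\}$-subgroup.
   Context: For $\chi\in{\rm Irr}(G)$, ${\rm cod}(\chi)=|G:\ker\chi|/\chi(1)$; the codegree graph $\Gamma(G)$ has vertices the prime divisors of $|G|$, with distinct $p,q$ adjacent iff $pq$ divides some ${\rm cod}(\chi)$, and $\overline{\Gamma}(G)$ is its complement. It is known that if $p,q$ are non-adjacent in $\Gamma(G)$ then $G$ has a Hall $\{p,q\}$-subgroup and each such is a Frobenius group or a 2-Frobenius group. A Frobenius group is $N\rtimes K$ with $C_N(k)=1$ for all $1\ne k\in K$ (kernel $N$, complement $K$). A group $H$ is a 2-Frobenius group of type $(p,q,r)$ if it has normal subgroups $N\le M$ such that $M$ is a Frobenius group with kernel $N$, $H/N$ is a Frobenius group with kernel $M/N$, $N$ is a $p$-group, $M/N$ is a $q$-group and $H/M$ is an $r$-group. *)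

From HB Require Import structures.
From mathcomp Require Import all_boot all_order all_algebra all_fingroup all_solvable all_field all_character.
Set Implicit Arguments. Unset Strict Implicit. Unset Printing Implicit Defensive.
Import Order.TTheory GRing.Theory Num.Theory.
Local Open Scope group_scope.

(* Codegree of an irreducible character: cod(chi) = |G : ker chi| / chi(1).
   Since chi(1) is a natural number dividing |G : ker chi|, we compute it in nat. *)
Definition codegree (gT : finGroupType) (G : {group gT}) (i : Iirr G) : nat :=
  (#|G : cfker ('chi[G]_i)%R| %/ Num.truncn (('chi[G]_i)%R 1%g))%N.

Definition codeg_adjacent (gT : finGroupType) (G : {group gT}) (p q : nat) : bool :=
  [exists i : Iirr G, (p * q %| codegree i)%N].

Definition codeg_vertex (gT : finGroupType) (G : {group gT}) (p : nat) : bool :=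
  p \in \pi(G).

Definition pi2 (p q : nat) : nat_pred := [pred r : nat | (r == p) || (r == q)].

Definition two_Frobenius (gT : finGroupType) (H : {group gT}) (p q r : nat) : Prop :=
  exists N M : {group gT},
    [/\ [/\ N <| H, M <| H & N \subset M],
        [Frobenius M with kernel N],
        [Frobenius (H / N) with kernel (M / N)] &
        [/\ p.-group N, q.-group (M / N) & r.-group (H / M)]].

Definition Frob_kernel_q_compl_p (gT : finGroupType) (H : {group gT}) (p q : nat) : Prop :=
  exists Q P : {group gT},
    [/\ [Frobenius H = Q ><| P], q.-Sylow(H) Q & p.-Sylow(H) P].

From HB Require Import structures.
From mathcomp Require Import all_boot all_order all_algebra all_fingroup all_solvable all_field all_character.
From mathcomp Require Import zify.

Set Implicit Arguments.
Unset Strict Implicit.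
Unset Printing Implicit Defensive.

Local Open Scope group_scope.

(* The argument only uses the orders a = |G|_p and b = |G|_q, which every Hall
   {p,q}-subgroup shares.  A Frobenius group with kernel of order b and
   complement of order a forces a | b - 1, so a < b; a 2-Frobenius group of type
   (p,q,p) forces a = n c with b | n - 1 and c | b - 1, so b < a.  Two Hall
   subgroups oriented in opposite directions are therefore incompatible: the
   pure cases contradict these inequalities, and in the mixed case a | b - 1 and
   b = n c with a | n - 1 give a | c - 1, against c | a - 1. *)

Section OrderArithmetic.
Local Open Scope nat_scope.

Definition Frobenius_orders (a b : nat) : Prop := [/\ 1 < a, 1 < b & a %| b.-1].

Definition two_Frobenius_orders (a b : nat) : Prop :=
  exists n c, [/\ a = n * c, 1 < n, 1 < c, b %| n.-1 & c %| b.-1].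

Definition oriented_orders (a b : nat) : Prop :=
  Frobenius_orders a b \/ two_Frobenius_orders a b.

Lemma Frobenius_orders_lt a b : Frobenius_orders a b -> a < b.
Proof. by case=> _ b_gt1 /dvdn_leq; lia. Qed.

Lemma two_Frobenius_orders_gt a b : two_Frobenius_orders a b -> b < a.
Proof. by case=> n [c [-> n_gt1 c_gt1 /dvdn_leq b_le _]]; nia. Qed.

Lemma Frobenius_two_Frobenius_orders a b :
  Frobenius_orders a b -> ~ two_Frobenius_orders b a.
Proof.
case=> a_gt1 _ a_dvd_b1 [n [c [def_b n_gt1 c_gt1 a_dvd_n1 c_dvd_a1]]].
have a_dvd_c1 : a %| c.-1.
  have def_b1 : b.-1 = c * n.-1 + c.-1 by rewrite def_b; nia.
  by rewrite -(dvdn_addr _ (dvdn_mull c a_dvd_n1)) -def_b1.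
by have := dvdn_leq _ a_dvd_c1; have := dvdn_leq _ c_dvd_a1; lia.
Qed.

Lemma oriented_orders_asym a b : oriented_orders a b -> ~ oriented_orders b a.
Proof.
case=> [Fab | Tab] [Fba | Tba].
- by have := Frobenius_orders_lt Fab; have := Frobenius_orders_lt Fba; lia.
- exact: Frobenius_two_Frobenius_orders Fab Tba.
- exact: Frobenius_two_Frobenius_orders Fba Tab.
- by have := two_Frobenius_orders_gt Tab; have := two_Frobenius_orders_gt Tba; lia.
Qed.

End OrderArithmetic.

Lemma Frob_kernel_q_compl_p_orders (gT : finGroupType) (H : {group gT}) p q :
  Frob_kernel_q_compl_p H p q -> Frobenius_orders #|H|`_p #|H|`_q.
Proof.
case=> Q [P [frobH sylQ sylP]].
rewrite -(card_Hall sylQ) -(card_Hall sylP).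
have [_ ntQ ntP _ _] := Frobenius_context frobH.
by split; rewrite ?cardG_gt1 ?(Frobenius_dvd_ker1 frobH).
Qed.

Lemma two_Frobenius_card (gT : finGroupType) (H : {group gT}) p q r :
  two_Frobenius H p q r -> exists n m c,
  [/\ #|H| = (n * m * c)%N, p.-nat n, q.-nat m, r.-nat c &
      [/\ (1 < n)%N, (1 < c)%N, (m %| n.-1)%N & (c %| m.-1)%N]].
Proof.
case=> N [M [[nsNH nsMH sNM] frobM frobHbar [pN qMbar rHM]]].
have sMH := normal_sub nsMH; have nMH := normal_norm nsMH.
have nNH := normal_norm nsNH.
have nNM : M \subset 'N(N) := subset_trans sMH nNH.
have indexHM : #|H / N : M / N| = #|H : M|.
  by rewrite index_quotient_eq // (subset_trans (subsetIr _ _) sNM).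
rewrite /pgroup !card_quotient // in qMbar rHM.
exists #|N|, #|M : N|, #|H : M|.
split=> //; first by rewrite (Lagrange sNM) (Lagrange sMH).
split; last 2 first.
- exact: Frobenius_ker_dvd_ker1 frobM.
- by have := Frobenius_ker_dvd_ker1 frobHbar; rewrite indexHM card_quotient.
- have /existsP[K frobMK] := frobM.
  by have [_ ntN _ _ _] := Frobenius_context frobMK; rewrite cardG_gt1.
have /existsP[K frobHK] := frobHbar.
have [_ _ _ /andP[_ ltMH] _] := Frobenius_context frobHK.
by rewrite -indexHM indexg_gt1.
Qed.

Lemma two_Frobenius_orders_of (gT : finGroupType) (H : {group gT}) p q :
  p != q -> two_Frobenius H p q p -> two_Frobenius_orders #|H|`_p #|H|`_q.
Proof.
move=> neq_pq /two_Frobenius_card[n [m [c [-> pn qm pc [n_gt1 c_gt1 dvd_m dvd_c]]]]].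
have p'm : p^'.-nat m by apply: (pi_p'nat qm); rewrite !inE.
have q'n : q^'.-nat n by apply: (pi_p'nat pn); rewrite !inE eq_sym.
have q'c : q^'.-nat c by apply: (pi_p'nat pc); rewrite !inE eq_sym.
have m_gt0 : (0 < m)%N by case/andP: qm.
exists n, c; rewrite !partnM ?muln_gt0 ?m_gt0 ?(ltnW n_gt1) ?(ltnW c_gt1) //.
rewrite (part_pnat_id pn) (part_pnat_id qm) (part_pnat_id pc).
by rewrite (part_p'nat p'm) (part_p'nat q'n) (part_p'nat q'c) mul1n !muln1.
Qed.

Lemma oriented_orders_of (gT : finGroupType) (H : {group gT}) p q :
  p != q -> Frob_kernel_q_compl_p H p q \/ two_Frobenius H p q p ->
  oriented_orders #|H|`_p #|H|`_q.
Proof.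
move=> neq_pq [/Frob_kernel_q_compl_p_orders | /(two_Frobenius_orders_of neq_pq)].
  by left.
by right.
Qed.

Lemma Hall_partn (gT : finGroupType) (G H : {group gT}) pi r :
  pi.-Hall(G) H -> r \in pi -> (#|H|`_r)%N = (#|G|`_r)%N.
Proof.
by move=> hallH pi_r; rewrite (card_Hall hallH) partn_part // => s /eqnP ->.
Qed.

Theorem mainTheorem5 (gT : finGroupType) (G : {group gT}) (p q : nat) :
  prime p -> prime q -> p != q ->
  codeg_vertex G p -> codeg_vertex G q -> ~~ codeg_adjacent G p q ->
  ~ (exists H1 H2 : {group gT},
       [/\ (pi2 p q).-Hall(G) H1, (pi2 p q).-Hall(G) H2,
           Frob_kernel_q_compl_p H1 p q \/ two_Frobenius H1 p q p &
           Frob_kernel_q_compl_p H2 q p \/ two_Frobenius H2 q p q]).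
Proof.
(* Non-adjacency only serves, in the paper, to produce the Hall subgroups,
   which are given here; the argument is purely about their orders. *)
move=> _ _ neq_pq _ _ _ [H1 [H2 [hallH1 hallH2 typeH1 typeH2]]].
have neq_qp : q != p by rewrite eq_sym.
have pi_p : p \in pi2 p q by rewrite inE eqxx.
have pi_q : q \in pi2 p q by rewrite inE eqxx orbT.
have orientedH1 := oriented_orders_of neq_pq typeH1.
have orientedH2 := oriented_orders_of neq_qp typeH2.
rewrite (Hall_partn hallH1 pi_p) (Hall_partn hallH1 pi_q) in orientedH1.
rewrite (Hall_partn hallH2 pi_p) (Hall_partn hallH2 pi_q) in orientedH2.
exact: oriented_orders_asym orientedH1 orientedH2.
Qed.
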